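(* Let $V$ be a vertex algebra and $W_1,W_2$ $V$-modules with $g(V)_{\ge0}W_1=W_1$. Then every $g(V)_{\ge0}$-homomorphism $f:W_1\to W_2$ (a linear map with $f(v_nw)=v_nf(w)$ for all $v\in V$, $n\ge0$, $w\in W_1$) is a $V$-homomorphism, i.e. $f(v_nw)=v_nf(w)$ for all $n\in\mathbb Z$.
   Context: $(V,Y,\mathbf 1)$ is a vertex algebra; $V$-modules are modules for the vertex algebra (no grading assumed), with $Y_W(v,x)=\sum_nv_nx^{-n-1}$. $g(V)_{\ge0}W_1=\mathrm{span}\{v_nw\mid v\in V,\ n\ge0,\ w\in W_1\}$. *)

From HB Require Import structures.
From mathcomp Require Import all_boot all_order all_algebra.
Set Implicit Arguments. Unset Strict Implicit. Unset Printing Implicit Defensive.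
Import Order.TTheory GRing.Theory Num.Theory.
Local Open Scope ring_scope.

(* Generalized binomial coefficient binom(l, i) for l : int, i : nat,
   as an integer:  binom(k, i) = 'C(k, i) for k >= 0, and
   binom(-(k+1), i) = (-1)^i 'C(k+i, i). *)
Definition binz (l : int) (i : nat) : int :=
  match l with
  | Posz k => ('C(k, i))%:Z
  | Negz k => (-1) ^+ i * ('C(k + i, i))%:Z
  end.

Section VA.
Variable K : fieldType.

(* Bilinearity of a vertex operator  (u, w) |-> Y(u, x) w = sum_n u_n w x^{-n-1}. *)
Definition bilinear_op (V W : lmodType K) (Y : V -> W -> int -> W) : Prop :=
  (forall (a : K) u u' w n, Y (a *: u + u') w n = a *: Y u w n + Y u' w n) /\
  (forall (a : K) u w w' n, Y u (a *: w + w') n = a *: Y u w n + Y u w' n).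

Definition truncation (V W : lmodType K) (Y : V -> W -> int -> W) : Prop :=
  forall u w, exists N : int, forall n : int, N <= n -> Y u w n = 0.

(* Jacobi identity in component form (Borcherds identity): for all l m n : int,
   sum_{i>=0} binom(m,i) (u_{l+i} v)_{m+n-i} w
   = sum_{i>=0} (-1)^i binom(l,i) (u_{l+m-i} v_{n+i} w - (-1)^l v_{l+n-i} u_{m+i} w).
   The sums are finite by truncation; we state it with the sums cut at any N
   beyond which all the summands vanish. *)
Definition borcherds (V W : lmodType K) (Y : V -> V -> int -> V)
    (YW : V -> W -> int -> W) : Prop :=
  forall (u v : V) (w : W) (l m n : int) (N : nat),
    (forall i : nat, (N <= i)%N ->
       [/\ Y u v (l + i%:Z) = 0, YW u w (m + i%:Z) = 0 & YW v w (n + i%:Z) = 0]) ->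
    \sum_(i < N) (YW (Y u v (l + i%:Z)) w (m + n - i%:Z)) *~ binz m i =
    \sum_(i < N)
       (YW u (YW v w (n + i%:Z)) (l + m - i%:Z)
        - (YW v (YW u w (m + i%:Z)) (l + n - i%:Z)) *~ ((-1) ^+ absz l))
         *~ ((-1) ^+ i * binz l i).

Definition is_vertex_algebra (V : lmodType K) (Y : V -> V -> int -> V) (vac : V) : Prop :=
  [/\ bilinear_op Y,
      truncation Y,
      (forall v n, Y vac v n = if n == -1 then v else 0),
      (forall u, Y u vac (-1) = u /\ forall n : nat, Y u vac n%:Z = 0)
    & borcherds Y Y].

Definition is_module (V : lmodType K) (Y : V -> V -> int -> V) (vac : V)
    (W : lmodType K) (YW : V -> W -> int -> W) : Prop :=
  [/\ bilinear_op YW,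
      truncation YW,
      (forall w n, YW vac w n = if n == -1 then w else 0)
    & borcherds Y YW].

Definition in_span (W : lmodType K) (P : W -> Prop) (w : W) : Prop :=
  exists s : seq (K * W), (forall t, t \in s -> P t.2) /\
    w = \sum_(t <- s) t.1 *: t.2.

(* Generators of g(V)_{>=0} W :  v_n w  with v in V, n >= 0, w in W. *)
Definition gen_nonneg (V W : lmodType K) (YW : V -> W -> int -> W) (x : W) : Prop :=
  exists (v : V) (n : nat) (w : W), x = YW v w n%:Z.

Definition is_K_linear (W1 W2 : lmodType K) (f : W1 -> W2) : Prop :=
  forall (a : K) x y, f (a *: x + y) = a *: f x + f y.

End VA.

From HB Require Import structures.
From mathcomp Require Import all_boot all_order all_algebra.
From mathcomp Require Import zify.
Set Implicit Arguments.
Import Order.TTheory GRing.Theory Num.Theory.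
Local Open Scope ring_scope.

(* Since W1 is spanned by the vectors b_j w with j >= 0, it suffices to show
   f(a_k b_j w) = a_k b_j f(w) for all k and all j >= 0.  Choose m >= 0 with
   a_{m+i} w = 0 for all i >= 0 (in W1, and a_{m+i} f(w) = 0 in W2), and apply
   the Borcherds identity with (l, m, n) = (k - m, m, j): one sum of its right
   side vanishes and what remains is
     sum_i binom(m, i) (a_{k-m+i} b)_{m+j-i} w
       = sum_i (-1)^i binom(k-m, i) a_{k-i} b_{j+i} w.
   Since binom(m, i) = 0 for i > m, the left side only involves nonnegative
   modes, which f preserves; on the right the terms i >= 1 are preserved by
   descending induction on j (b_j w = 0 for j large), leaving the term i = 0,
   which is a_k b_j w. *)

Lemma binz0 (l : int) : binz l 0 = 1.
Proof. by case: l => n /=; rewrite ?addn0 bin0. Qed.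

Section LinearMaps.
Variables (K : fieldType) (W W' : lmodType K).

Lemma is_K_linear_comp (W'' : lmodType K) (f : W' -> W'') (g : W -> W') :
  is_K_linear f -> is_K_linear g -> is_K_linear (f \o g).
Proof. by move=> f_lin g_lin a x y /=; rewrite g_lin f_lin. Qed.

Variables (P : W -> Prop) (g h : W -> W').
Hypotheses (g_lin : is_K_linear g) (h_lin : is_K_linear h).

HB.instance Definition _ := GRing.isLinear.Build K W W' *:%R g g_lin.
HB.instance Definition _ := GRing.isLinear.Build K W W' *:%R h h_lin.

Lemma in_span_linear_eq (w : W) :
  (forall x, P x -> g x = h x) -> in_span P w -> g w = h w.
Proof.
move=> eq_gh [s [sP ->]]; rewrite !linear_sum; apply: eq_big_seq => t ts.
by rewrite !linearZ; congr (_ *: _); apply: eq_gh; apply: sP.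
Qed.

End LinearMaps.

Section VertexOperators.
Variables (K : fieldType) (V W : lmodType K) (YW : V -> W -> int -> W).

Lemma bilinear_op_linear_r (v : V) (n : int) :
  bilinear_op YW -> is_K_linear (YW v ^~ n).
Proof. by case=> _ lin_r a x y; apply: lin_r. Qed.

Lemma bilinear_op0r (v : V) (n : int) : bilinear_op YW -> YW v 0 n = 0.
Proof.
move=> /(bilinear_op_linear_r v n) lin; apply: (addrI (YW v 0 n)).
by have := lin 1 0 0; rewrite !scale1r !addr0.
Qed.

Lemma truncation_nat (u : V) (w : W) : truncation YW ->
  exists N : nat, forall n : int, N%:Z <= n -> YW u w n = 0.
Proof.
move=> /(_ u w) [N trN]; exists (absz N) => n le_Nn.
by apply: trN; lia.
Qed.

Variables (Y : V -> V -> int -> V).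
Hypotheses (YW_bil : bilinear_op YW) (YW_bor : borcherds Y YW).

Lemma borcherds_lowered (a b : V) (w : W) (m : nat) (k j : int) (N : nat) :
  (forall i : nat, YW a w (m%:Z + i%:Z) = 0) ->
  (forall i : nat, (N <= i)%N ->
     Y a b (k - m%:Z + i%:Z) = 0 /\ YW b w (j + i%:Z) = 0) ->
  \sum_(i < N) YW (Y a b (k - m%:Z + i%:Z)) w (m%:Z + j - i%:Z) *~ binz m%:Z i =
  \sum_(i < N) YW a (YW b w (j + i%:Z)) (k - i%:Z)
                 *~ ((-1) ^+ i * binz (k - m%:Z) i).
Proof.
move=> a_w0 trN; rewrite YW_bor; last by move=> i /trN[]; split.
apply: eq_bigr => i _.
by rewrite a_w0 bilinear_op0r // mul0rz subr0 subrK.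
Qed.

End VertexOperators.

Section NonnegativeModeHomomorphism.
Variables (K : fieldType) (V : lmodType K) (Y : V -> V -> int -> V).
Variables (W1 W2 : lmodType K).
Variables (Y1 : V -> W1 -> int -> W1) (Y2 : V -> W2 -> int -> W2).
Hypotheses (Y_trunc : truncation Y).
Hypotheses (Y1_bil : bilinear_op Y1) (Y1_trunc : truncation Y1)
  (Y1_bor : borcherds Y Y1).
Hypotheses (Y2_bil : bilinear_op Y2) (Y2_trunc : truncation Y2)
  (Y2_bor : borcherds Y Y2).
Variables (f : W1 -> W2).
Hypotheses (f_lin : is_K_linear f)
  (f_nonneg : forall (v : V) (w : W1) (n : nat), f (Y1 v w n%:Z) = Y2 v (f w) n%:Z).

HB.instance Definition _ := GRing.isLinear.Build K W1 W2 *:%R f f_lin.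

Lemma hom_mode_nonneg_mode_step (a b : V) (w : W1) (j : nat) (k : int) :
  (forall (i : nat) (k' : int), (0 < i)%N ->
     f (Y1 a (Y1 b w (j + i)%N%:Z) k') = Y2 a (Y2 b (f w) (j + i)%N%:Z) k') ->
  f (Y1 a (Y1 b w j%:Z) k) = Y2 a (Y2 b (f w) j%:Z) k.
Proof.
move=> IH.
have [M1 trM1] := truncation_nat a w Y1_trunc.
have [M2 trM2] := truncation_nat a (f w) Y2_trunc.
have [Nab trNab] := truncation_nat a b Y_trunc.
have [J1 trJ1] := truncation_nat b w Y1_trunc.
have [J2 trJ2] := truncation_nat b (f w) Y2_trunc.
pose m := (M1 + M2)%N.
pose N := (Nab + absz (k - m%:Z) + J1 + J2).+1.
have a_w0 (i : nat) : Y1 a w (m%:Z + i%:Z) = 0 by apply: trM1; lia.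
have a_fw0 (i : nat) : Y2 a (f w) (m%:Z + i%:Z) = 0 by apply: trM2; lia.
have ab0 (i : nat) : (N <= i)%N -> Y a b (k - m%:Z + i%:Z) = 0.
  by move=> le_Ni; apply: trNab; lia.
have trN1 (i : nat) : (N <= i)%N ->
    Y a b (k - m%:Z + i%:Z) = 0 /\ Y1 b w (j%:Z + i%:Z) = 0.
  by move=> le_Ni; split; [apply: ab0 | apply: trJ1; lia].
have trN2 (i : nat) : (N <= i)%N ->
    Y a b (k - m%:Z + i%:Z) = 0 /\ Y2 b (f w) (j%:Z + i%:Z) = 0.
  by move=> le_Ni; split; [apply: ab0 | apply: trJ2; lia].
have E1 := borcherds_lowered Y1_bil Y1_bor a b w m k j%:Z N a_w0 trN1.
have E2 := borcherds_lowered Y2_bil Y2_bor a b (f w) m k j%:Z N a_fw0 trN2.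
have f_lhs : f (\sum_(i < N) Y1 (Y a b (k - m%:Z + i%:Z)) w (m%:Z + j%:Z - i%:Z)
                   *~ binz m%:Z i)
           = \sum_(i < N) Y2 (Y a b (k - m%:Z + i%:Z)) (f w) (m%:Z + j%:Z - i%:Z)
                   *~ binz m%:Z i.
  rewrite raddf_sum; apply: eq_bigr => i _; rewrite raddfMz /=.
  have [le_im | lt_mi] := leqP i m; last by rewrite bin_small ?mulr0z.
  have -> : m%:Z + j%:Z - i%:Z = (m + j - i)%N%:Z by lia.
  by rewrite f_nonneg.
rewrite E1 E2 raddf_sum !big_ord_recl /= in f_lhs.
move: f_lhs; under eq_bigr => i _ do
  rewrite raddfMz /= -PoszD (IH (bump 0 i)) // PoszD.
by move/addIr; rewrite binz0 expr0 mul1r !mulr1z !addr0.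
Qed.

Lemma hom_mode_nonneg_mode (a b : V) (w : W1) (j : nat) (k : int) :
  f (Y1 a (Y1 b w j%:Z) k) = Y2 a (Y2 b (f w) j%:Z) k.
Proof.
have [J1 trJ1] := truncation_nat b w Y1_trunc.
have [J2 trJ2] := truncation_nat b (f w) Y2_trunc.
suff: forall d j k, (J1 + J2 <= j + d)%N ->
    f (Y1 a (Y1 b w j%:Z) k) = Y2 a (Y2 b (f w) j%:Z) k.
  by move/(_ (J1 + J2)%N j k); apply; lia.
elim=> [|d IH] {}j {}k le_Jjd.
  by rewrite trJ1 ?trJ2 ?bilinear_op0r ?raddf0 //; lia.
apply: hom_mode_nonneg_mode_step => i k' lt0i.
by apply: IH; lia.
Qed.

End NonnegativeModeHomomorphism.

Theorem mainTheorem12 (K : fieldType) (HK : [pchar K] =i pred0)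
  (V : lmodType K) (Y : V -> V -> int -> V) (vac : V)
  (HV : is_vertex_algebra Y vac)
  (W1 W2 : lmodType K) (Y1 : V -> W1 -> int -> W1) (Y2 : V -> W2 -> int -> W2)
  (HW1 : is_module Y vac Y1) (HW2 : is_module Y vac Y2)
  (Hgen : forall w : W1, in_span (gen_nonneg Y1) w)
  (f : W1 -> W2) (Hlin : is_K_linear f)
  (Hf : forall (v : V) (w : W1) (n : nat), f (Y1 v w n%:Z) = Y2 v (f w) n%:Z) :
  forall (v : V) (w : W1) (n : int), f (Y1 v w n) = Y2 v (f w) n.
Proof.
case: HV => _ Y_trunc _ _ _; case: HW1 => Y1_bil Y1_trunc _ Y1_bor.
case: HW2 => Y2_bil Y2_trunc _ Y2_bor.
move=> v w n.
have f_Y1_lin := is_K_linear_comp Hlin (bilinear_op_linear_r v n Y1_bil).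
have Y2_f_lin := is_K_linear_comp (bilinear_op_linear_r v n Y2_bil) Hlin.
apply: (in_span_linear_eq f_Y1_lin Y2_f_lin _ (Hgen w)) => _ [b [j [x ->]]] /=.
rewrite Hf.
exact: hom_mode_nonneg_mode Y_trunc Y1_bil Y1_trunc Y1_bor Y2_bil Y2_trunc Y2_bor
  f Hlin Hf v b x j n.
Qed.
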